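(* Let $\overline{\mathrm{PRCN}}\subseteq\mathbb{R}$ be the set of real numbers of the form $I+\sum_{i=1}^\infty P(i)2^{-i}$ with $I\in\mathbb{Z}$ and $P:\mathbb{Z}^+\to\{0,1\}$ primitive recursive, and let $\overline{\mathrm{SPRCN}}\subseteq\mathbb{R}$ be the set of real numbers of the form $I+\sum_{i=1}^\infty P(i)2^{-i}$ with $I\in\mathbb{Z}$ and $P:\mathbb{Z}^+\to\{-1,0,1\}$ primitive recursive. Then $\overline{\mathrm{PRCN}}\subsetneq\overline{\mathrm{SPRCN}}$; that is, there is a real number which is the value of some signed primitive recursive binary series with digits in $\{-1,0,1\}$ but which has no binary expansion (with digits in $\{0,1\}$, after an integer part) given by a primitive recursive digit function.
   Context: A function $\mathbb{Z}^+\to\{0,1\}$ or $\mathbb{Z}^+\to\{-1,0,1\}$ is primitive recursive if it is obtained from a primitive recursive $P':\mathbb{N}\to\mathbb{N}$ via a primitive recursive encoding of the finitely many values. *)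

From Stdlib Require Import Reals List Arith ZArith.
Import ListNotations.
Open Scope R_scope.

(** Primitive recursive functions N^k -> N, represented as functions on
    lists of naturals (only the values on lists of length k matter). *)
Definition prec_fun (f : list nat -> nat) (g : list nat -> nat)
  : list nat -> nat :=
  fun v => match v with
           | [] => f []
           | n :: w => nat_rect (fun _ => nat) (f w)
                                (fun m r => g (m :: r :: w)) n
           end.

Inductive is_prim_rec : nat -> (list nat -> nat) -> Prop :=
| PR_zero (k : nat) : is_prim_rec k (fun _ => 0%nat)
| PR_succ : is_prim_rec 1 (fun v => S (hd 0%nat v))
| PR_proj (k i : nat) : (i < k)%nat -> is_prim_rec k (fun v => nth i v 0%nat)
| PR_comp (k m : nat) (g : list nat -> nat) (hs : nat -> list nat -> nat) :
    is_prim_rec m g ->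
    (forall i, (i < m)%nat -> is_prim_rec k (hs i)) ->
    is_prim_rec k (fun v => g (map (fun i => hs i v) (seq 0 m)))
| PR_rec (k : nat) (f g : list nat -> nat) :
    is_prim_rec k f -> is_prim_rec (S (S k)) g ->
    is_prim_rec (S k) (prec_fun f g)
| PR_ext (k : nat) (f g : list nat -> nat) :
    is_prim_rec k f ->
    (forall v, length v = k -> f v = g v) -> is_prim_rec k g.

Definition prim_rec1 (P' : nat -> nat) : Prop :=
  is_prim_rec 1 (fun v => P' (hd 0%nat v)).

Definition pr_bit_digits (P : nat -> Z) : Prop :=
  exists P' : nat -> nat, prim_rec1 P' /\
    forall i, (1 <= i)%nat -> (P' i <= 1)%nat /\ P i = Z.of_nat (P' i).

Definition pr_signed_digits (P : nat -> Z) : Prop :=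
  exists P' : nat -> nat, prim_rec1 P' /\
    forall i, (1 <= i)%nat -> (P' i <= 2)%nat /\ P i = (Z.of_nat (P' i) - 1)%Z.

Definition binary_series_value (I : Z) (P : nat -> Z) (x : R) : Prop :=
  infinite_sum (fun n => IZR (P (S n)) / 2 ^ (S n)) (x - IZR I).

Definition PRCN (x : R) : Prop :=
  exists (I : Z) (P : nat -> Z), pr_bit_digits P /\ binary_series_value I P x.

Definition SPRCN (x : R) : Prop :=
  exists (I : Z) (P : nat -> Z), pr_signed_digits P /\ binary_series_value I P x.

(* Primitive recursive programs are coded by naturals and run on a machine
   whose single step is primitive recursive; hence "program [e] on input [p]
   has halted after [t] steps, with output [r]" is primitive recursive in
   [e, p, t], although the universal function is not.  The signed digits are
   laid out in blocks: block [e] puts a digit [1] at position [p], then zeros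
   while program [e] runs on [p]; once it halts, the next digit is [-1] if the
   output was [1] and [+1] otherwise, and one more zero closes the block.  A
   signed expansion can postpone this choice at no cost, yet the choice
   decides on which side of an odd integer (the partial sum up to [p],
   scaled by [2^p]) the number [2^p x] lies, i.e. the [p]-th binary digit of [x], which therefore differs
   from the output of program [e].  The inclusion of PRCN in SPRCN only shifts
   the digit encoding. *)

From Stdlib Require Import Reals List Arith ZArith Lia Lra ConstructiveEpsilon.
Import ListNotations.

Local Open Scope nat_scope.

Definition prim_rec2 (f : nat -> nat -> nat) : Prop :=
  is_prim_rec 2 (fun v => f (nth 0 v 0) (nth 1 v 0)).
Definition prim_rec3 (f : nat -> nat -> nat -> nat) : Prop :=
  is_prim_rec 3 (fun v => f (nth 0 v 0) (nth 1 v 0) (nth 2 v 0)).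

Lemma prim_rec_comp1 k f a :
  prim_rec1 f -> is_prim_rec k a -> is_prim_rec k (fun v => f (a v)).
Proof.
  intros Hf Ha. apply (PR_comp k 1 _ (fun _ => a) Hf). intros; exact Ha.
Qed.

Lemma prim_rec_comp2 k f a b : prim_rec2 f ->
  is_prim_rec k a -> is_prim_rec k b -> is_prim_rec k (fun v => f (a v) (b v)).
Proof.
  intros Hf Ha Hb.
  apply (PR_comp k 2 _ (fun i => match i with 0 => a | _ => b end) Hf).
  intros [|i] Hi; auto.
Qed.

Lemma prim_rec_comp3 k f a b c : prim_rec3 f ->
  is_prim_rec k a -> is_prim_rec k b -> is_prim_rec k c ->
  is_prim_rec k (fun v => f (a v) (b v) (c v)).
Proof.
  intros Hf Ha Hb Hc.
  apply (PR_comp k 3 _ (fun i => match i with 0 => a | 1 => b | _ => c end) Hf).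
  intros [|[|i]] Hi; auto.
Qed.

Lemma prim_rec_succ : prim_rec1 S.
Proof. exact PR_succ. Qed.

Lemma prim_rec_const k c : is_prim_rec k (fun _ => c).
Proof.
  induction c as [|c IH]; [apply PR_zero|].
  exact (prim_rec_comp1 k S (fun _ => c) prim_rec_succ IH).
Qed.

Lemma prim_rec_by_recursion k f g (F : nat -> list nat -> nat) :
  is_prim_rec k f -> is_prim_rec (S (S k)) g ->
  (forall w, length w = k -> F 0 w = f w) ->
  (forall n w, length w = k -> F (S n) w = g (n :: F n w :: w)) ->
  is_prim_rec (S k) (fun v => F (hd 0 v) (tl v)).
Proof.
  intros Hf Hg H0 HS.
  eapply PR_ext; [apply (PR_rec k f g Hf Hg)|].
  intros [|n w] Hl; [discriminate|]. injection Hl as Hl.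
  simpl. induction n as [|n IH]; simpl.
  - rewrite H0; auto.
  - rewrite HS, IH by auto. reflexivity.
Qed.

Lemma prim_rec1_by_recursion (h : nat -> nat) c G : prim_rec2 G ->
  h 0 = c -> (forall n, h (S n) = G n (h n)) -> prim_rec1 h.
Proof.
  intros HG H0 HS.
  eapply PR_ext.
  - apply (prim_rec_by_recursion 0 (fun _ => c)
             (fun v => G (nth 0 v 0) (nth 1 v 0)) (fun n _ => h n));
      simpl; auto using prim_rec_const.
  - intros [|x v] _; reflexivity.
Qed.

Lemma prim_rec2_by_recursion (h : nat -> nat -> nat) a G :
  prim_rec1 a -> prim_rec3 G ->
  (forall y, h 0 y = a y) -> (forall n y, h (S n) y = G n (h n y) y) ->
  prim_rec2 h.
Proof.
  intros Ha HG H0 HS.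
  eapply PR_ext.
  - apply (prim_rec_by_recursion 1 (fun v => a (hd 0 v))
             (fun v => G (nth 0 v 0) (nth 1 v 0) (nth 2 v 0))
             (fun n w => h n (hd 0 w))); auto.
    intros n [|y w] _; apply HS.
  - intros [|x [|y v]] _; reflexivity.
Qed.

Lemma prim_rec_hd : is_prim_rec 1 (fun v => hd 0 v).
Proof. eapply PR_ext; [apply (PR_proj 1 0); lia|]. intros [|x v] _; reflexivity. Qed.

Create HintDb primrec.
#[export] Hint Resolve prim_rec_succ : primrec.

Ltac solve_prim_rec :=
  unfold prim_rec1, prim_rec2, prim_rec3; cbv beta zeta;
  repeat match goal with
  | |- is_prim_rec _ (fun _ => ?c) => apply prim_rec_const
  | |- is_prim_rec _ (fun v => hd 0 v) => exact prim_rec_hd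
  | |- is_prim_rec _ (hd 0) => exact prim_rec_hd
  | |- is_prim_rec _ (fun v => nth _ v 0) => apply PR_proj; lia
  | |- is_prim_rec _ (fun v => ?f _ _ _) =>
      eapply prim_rec_comp3; [solve [eauto with primrec]| | |]
  | |- is_prim_rec _ (fun v => ?f _ _) =>
      eapply prim_rec_comp2; [solve [eauto with primrec]| |]
  | |- is_prim_rec _ (fun v => ?f _) =>
      eapply prim_rec_comp1; [solve [eauto with primrec]|]
  end.

Lemma prim_rec_add : prim_rec2 Nat.add.
Proof.
  apply prim_rec2_by_recursion with (a := fun y => y) (G := fun _ r _ => S r);
    try solve [solve_prim_rec]; reflexivity.
Qed.
#[export] Hint Resolve prim_rec_add : primrec.

Lemma prim_rec_mul : prim_rec2 Nat.mul.
Proof.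
  apply prim_rec2_by_recursion with (a := fun _ => 0) (G := fun _ r y => y + r);
    try solve [solve_prim_rec]; intros; simpl; lia.
Qed.
#[export] Hint Resolve prim_rec_mul : primrec.

Lemma prim_rec_pred : prim_rec1 Nat.pred.
Proof.
  apply prim_rec1_by_recursion with (c := 0) (G := fun n _ => n);
    try solve [solve_prim_rec]; reflexivity.
Qed.
#[export] Hint Resolve prim_rec_pred : primrec.

Lemma prim_rec_sub : prim_rec2 Nat.sub.
Proof.
  assert (Hsubr : prim_rec2 (fun y x => x - y)).
  { apply prim_rec2_by_recursion with (a := fun x => x) (G := fun _ r _ => Nat.pred r);
      try solve [solve_prim_rec]; intros; simpl; lia. }
  exact (prim_rec_comp2 2 _ (fun v => nth 1 v 0) (fun v => nth 0 v 0) Hsubr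
           (PR_proj 2 1 ltac:(lia)) (PR_proj 2 0 ltac:(lia))).
Qed.
#[export] Hint Resolve prim_rec_sub : primrec.

Definition cond (c a b : nat) : nat := (1 - (1 - c)) * a + (1 - c) * b.
Definition chi_eq (x y : nat) : nat := 1 - ((x - y) + (y - x)).
Definition chi_le (x y : nat) : nat := 1 - (x - y).

Lemma cond_0 a b : cond 0 a b = b. Proof. unfold cond; lia. Qed.
Lemma cond_S n a b : cond (S n) a b = a. Proof. unfold cond; lia. Qed.
Lemma cond_le c a b n : a <= n -> b <= n -> cond c a b <= n.
Proof. destruct c; [rewrite cond_0 | rewrite cond_S]; auto. Qed.

Lemma chi_eq_1 x y : x = y -> chi_eq x y = 1. Proof. unfold chi_eq; lia. Qed.
Lemma chi_eq_0 x y : x <> y -> chi_eq x y = 0. Proof. unfold chi_eq; lia. Qed.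
Lemma chi_le_1 x y : x <= y -> chi_le x y = 1. Proof. unfold chi_le; lia. Qed.
Lemma chi_le_0 x y : y < x -> chi_le x y = 0. Proof. unfold chi_le; lia. Qed.

Lemma prim_rec_cond : prim_rec3 cond. Proof. unfold cond; solve_prim_rec. Qed.
Lemma prim_rec_chi_eq : prim_rec2 chi_eq. Proof. unfold chi_eq; solve_prim_rec. Qed.
Lemma prim_rec_chi_le : prim_rec2 chi_le. Proof. unfold chi_le; solve_prim_rec. Qed.
#[export] Hint Resolve prim_rec_cond prim_rec_chi_eq prim_rec_chi_le : primrec.

(** * Cantor pairing and coded lists *)

Fixpoint tri (n : nat) : nat := match n with 0 => 0 | S m => tri m + S m end.

Fixpoint tri_root (z : nat) : nat :=
  match z with
  | 0 => 0
  | S y => cond (chi_le (tri (S (tri_root y))) (S y)) (S (tri_root y)) (tri_root y)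
  end.

Lemma prim_rec_tri : prim_rec1 tri.
Proof.
  apply prim_rec1_by_recursion with (c := 0) (G := fun n r => r + S n);
    try solve [solve_prim_rec]; reflexivity.
Qed.
#[export] Hint Resolve prim_rec_tri : primrec.

Lemma prim_rec_tri_root : prim_rec1 tri_root.
Proof.
  apply prim_rec1_by_recursion with (c := 0)
    (G := fun n r => cond (chi_le (tri (S r)) (S n)) (S r) r);
    try solve [solve_prim_rec]; reflexivity.
Qed.
#[export] Hint Resolve prim_rec_tri_root : primrec.

Lemma tri_le n : n <= tri n. Proof. induction n; simpl; lia. Qed.

Lemma tri_lt_mono a b : a < b -> tri (S a) <= tri b.
Proof. induction 1; simpl in *; lia. Qed.

Lemma tri_root_spec z : tri (tri_root z) <= z < tri (S (tri_root z)).
Proof.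
  induction z as [|z IH]; simpl in *; [lia|].
  destruct (le_lt_dec (tri (tri_root z) + S (tri_root z)) (S z)).
  - rewrite chi_le_1, cond_S by (simpl; lia). simpl. lia.
  - rewrite chi_le_0, cond_0 by (simpl; lia). lia.
Qed.

Lemma tri_root_unique a z : tri a <= z < tri (S a) -> tri_root z = a.
Proof.
  intros Hz. pose proof (tri_root_spec z).
  destruct (lt_eq_lt_dec (tri_root z) a) as [[Hl|]|Hl]; auto;
    apply tri_lt_mono in Hl; lia.
Qed.

Definition cpair (x y : nat) : nat := tri (x + y) + y.
Definition csnd (z : nat) : nat := z - tri (tri_root z).
Definition cfst (z : nat) : nat := tri_root z - csnd z.

Lemma prim_rec_cpair : prim_rec2 cpair. Proof. unfold cpair; solve_prim_rec. Qed.
Lemma prim_rec_csnd : prim_rec1 csnd. Proof. unfold csnd; solve_prim_rec. Qed.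
Lemma prim_rec_cfst : prim_rec1 cfst. Proof. unfold cfst, csnd; solve_prim_rec. Qed.
#[export] Hint Resolve prim_rec_cpair prim_rec_cfst prim_rec_csnd : primrec.

Lemma tri_root_cpair x y : tri_root (cpair x y) = x + y.
Proof. apply tri_root_unique. unfold cpair. simpl. lia. Qed.

Lemma csnd_cpair x y : csnd (cpair x y) = y.
Proof. unfold csnd. rewrite tri_root_cpair. unfold cpair. lia. Qed.

Lemma cfst_cpair x y : cfst (cpair x y) = x.
Proof. unfold cfst. rewrite csnd_cpair, tri_root_cpair. lia. Qed.

Lemma cpair_cfst_csnd z : cpair (cfst z) (csnd z) = z.
Proof.
  pose proof (tri_root_spec z). simpl in *. unfold cfst, csnd, cpair.
  replace (tri_root z - (z - tri (tri_root z)) + (z - tri (tri_root z)))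
    with (tri_root z) by lia.
  lia.
Qed.

Lemma csnd_le z : csnd z <= z. Proof. unfold csnd. lia. Qed.

Lemma cfst_le z : cfst z <= z.
Proof. unfold cfst. pose proof (tri_root_spec z). pose proof (tri_le (tri_root z)). lia. Qed.

Definition ncons (a l : nat) : nat := S (cpair a l).
Definition nhd (l : nat) : nat := cfst (Nat.pred l).
Definition ntl (l : nat) : nat := csnd (Nat.pred l).

Lemma prim_rec_ncons : prim_rec2 ncons. Proof. unfold ncons; solve_prim_rec. Qed.
Lemma prim_rec_nhd : prim_rec1 nhd. Proof. unfold nhd; solve_prim_rec. Qed.
Lemma prim_rec_ntl : prim_rec1 ntl. Proof. unfold ntl; solve_prim_rec. Qed.
#[export] Hint Resolve prim_rec_ncons prim_rec_nhd prim_rec_ntl : primrec.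

Lemma nhd_ncons a l : nhd (ncons a l) = a. Proof. apply cfst_cpair. Qed.
Lemma ntl_ncons a l : ntl (ncons a l) = l. Proof. apply csnd_cpair. Qed.

Fixpoint code_list (l : list nat) : nat :=
  match l with [] => 0 | a :: t => ncons a (code_list t) end.

Lemma nhd_code_list l : nhd (code_list l) = hd 0 l.
Proof. destruct l; [reflexivity | apply nhd_ncons]. Qed.

Lemma ntl_code_list l : ntl (code_list l) = code_list (tl l).
Proof. destruct l; [reflexivity | apply ntl_ncons]. Qed.

Definition ntl_iter (x l : nat) : nat := Nat.iter x ntl l.
Definition nnth (x l : nat) : nat := nhd (ntl_iter x l).

Lemma prim_rec_ntl_iter : prim_rec2 ntl_iter.
Proof.
  apply prim_rec2_by_recursion with (a := fun l => l) (G := fun _ r _ => ntl r);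
    try solve [solve_prim_rec]; reflexivity.
Qed.
#[export] Hint Resolve prim_rec_ntl_iter : primrec.

Lemma prim_rec_nnth : prim_rec2 nnth. Proof. unfold nnth; solve_prim_rec. Qed.
#[export] Hint Resolve prim_rec_nnth : primrec.

Lemma nnth_code_list x l : nnth x (code_list l) = nth x l 0.
Proof.
  unfold nnth, ntl_iter. induction x as [|x IH] in l |- *.
  - simpl. rewrite nhd_code_list. destruct l; reflexivity.
  - rewrite Nat.iter_succ_r, ntl_code_list, IH. destruct l; [destruct x|]; reflexivity.
Qed.

(* Codes of primitive recursive programs: [0] is the zero function,
   [S (cpair 0 _)] the successor of the first argument, [S (cpair 1 i)] the
   [i]-th projection, [S (cpair 2 (cpair g hs))] the composition of [g] with
   the coded list [hs], and [S (cpair t (cpair f g))] for [t >= 3] primitive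
   recursion on the first argument with base [f] and step [g]. *)
Inductive Eval : nat -> list nat -> nat -> Prop :=
| Eval_zero v : Eval 0 v 0
| Eval_succ x v : Eval (S (cpair 0 x)) v (S (hd 0 v))
| Eval_proj i v : Eval (S (cpair 1 i)) v (nth i v 0)
| Eval_comp x v rs r :
    EvalList (csnd x) v rs -> Eval (cfst x) rs r -> Eval (S (cpair 2 x)) v r
| Eval_rec t x v r : 3 <= t ->
    EvalRec (cfst x) (csnd x) (tl v) (hd 0 v) r -> Eval (S (cpair t x)) v r
with EvalList : nat -> list nat -> list nat -> Prop :=
| EvalList_nil v : EvalList 0 v []
| EvalList_cons hs v r rs :
    Eval (cfst hs) v r -> EvalList (csnd hs) v rs -> EvalList (S hs) v (r :: rs)
with EvalRec : nat -> nat -> list nat -> nat -> nat -> Prop :=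
| EvalRec_0 f g w r : Eval f w r -> EvalRec f g w 0 r
| EvalRec_S f g w n r r' :
    EvalRec f g w n r -> Eval g (n :: r :: w) r' -> EvalRec f g w (S n) r'.

Scheme Eval_ind' := Induction for Eval Sort Prop
with EvalList_ind' := Induction for EvalList Sort Prop
with EvalRec_ind' := Induction for EvalRec Sort Prop.
Combined Scheme Eval_mutind from Eval_ind', EvalList_ind', EvalRec_ind'.

Lemma EvalList_total E : (forall e, e < E -> forall v, exists r, Eval e v r) ->
  forall hs, hs < E -> forall v, exists rs, EvalList hs v rs.
Proof.
  intros IH hs. induction hs as [[|hs] IHhs] using lt_wf_ind; intros Hlt v.
  - exists []; constructor.
  - pose proof (cfst_le hs). pose proof (csnd_le hs).
    destruct (IH (cfst hs) ltac:(lia) v) as [r Hr].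
    destruct (IHhs (csnd hs) ltac:(lia) ltac:(lia) v) as [rs Hrs].
    exists (r :: rs). constructor; auto.
Qed.

Lemma Eval_total e : forall v, exists r, Eval e v r.
Proof.
  induction e as [[|a] IH] using lt_wf_ind; intros v; [exists 0; constructor|].
  rewrite <- (cpair_cfst_csnd a) in IH |- *.
  set (t := cfst a) in *. set (x := csnd a) in *.
  assert (Hx : x < S (cpair t x)) by (unfold cpair; lia).
  pose proof (cfst_le x). pose proof (csnd_le x).
  destruct t as [|[|[|t]]].
  - eexists; constructor.
  - eexists; constructor.
  - destruct (EvalList_total _ IH (csnd x) ltac:(lia) v) as [rs Hrs].
    destruct (IH (cfst x) ltac:(lia) rs) as [r Hr].
    exists r. econstructor; eauto.
  - assert (Hrec : forall n, exists r, EvalRec (cfst x) (csnd x) (tl v) n r).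
    { induction n as [|n [r Hr]].
      - destruct (IH (cfst x) ltac:(lia) (tl v)) as [r Hr].
        exists r; constructor; auto.
      - destruct (IH (csnd x) ltac:(lia) (n :: r :: tl v)) as [r' Hr'].
        exists r'. econstructor; eauto. }
    destruct (Hrec (hd 0 v)) as [r Hr]. exists r. constructor; auto. lia.
Qed.

Lemma list_choice (P : nat -> nat -> Prop) m :
  (forall i, i < m -> exists e, P i e) ->
  exists l, length l = m /\ forall i, i < m -> P i (nth i l 0).
Proof.
  induction m as [|m IH]; intros H.
  - exists []; split; [reflexivity | intros; lia].
  - destruct IH as [l [Hl Hp]]; [intros; apply H; lia|].
    destruct (H m ltac:(lia)) as [e He].
    exists (l ++ [e]). split; [rewrite length_app; simpl; lia|].
    intros i Hi. destruct (Nat.eq_dec i m) as [->|].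
    + rewrite app_nth2, Hl, Nat.sub_diag by lia. exact He.
    + rewrite app_nth1 by lia. apply Hp; lia.
Qed.

Lemma EvalList_map (hs : nat -> list nat -> nat) v l off :
  (forall i, i < length l -> Eval (nth i l 0) v (hs (off + i) v)) ->
  EvalList (code_list l) v (map (fun i => hs i v) (seq off (length l))).
Proof.
  induction l as [|e l IH] in off |- *; intros H; simpl; constructor.
  - rewrite cfst_cpair. specialize (H 0 ltac:(simpl; lia)).
    rewrite Nat.add_0_r in H. exact H.
  - rewrite csnd_cpair. apply IH. intros i Hi.
    replace (S off + i) with (off + S i) by lia. apply (H (S i)). simpl; lia.
Qed.

Lemma prim_rec_has_code k f : is_prim_rec k f ->
  exists e, forall v, length v = k -> Eval e v (f v).
Proof.
  induction 1 as [k | | k i _ | k m g hs _ [eg Hg] _ IHhs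
                 | k f g _ [ef Hf] _ [eg Hg] | k f g _ [e He] Hfg].
  - exists 0. intros; constructor.
  - exists (S (cpair 0 0)). intros; constructor.
  - exists (S (cpair 1 i)). intros; constructor.
  - destruct (list_choice (fun i e => forall v, length v = k -> Eval e v (hs i v)) m)
      as [l [Hl Hp]]; [intros; apply IHhs; auto|].
    exists (S (cpair 2 (cpair eg (code_list l)))). intros v Hv.
    econstructor.
    + rewrite csnd_cpair, <- Hl. apply (EvalList_map hs v l 0).
      intros i Hi. apply Hp; auto; lia.
    + rewrite cfst_cpair, Hl. apply Hg. rewrite length_map, length_seq. auto.
  - exists (S (cpair 3 (cpair ef eg))). intros [|n w] Hv; [discriminate|].
    injection Hv as Hv.
    apply Eval_rec; [lia|]. rewrite cfst_cpair, csnd_cpair. simpl.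
    induction n as [|n IHn]; simpl; econstructor; eauto; apply Hg; simpl; auto.
  - exists e. intros v Hv. rewrite <- Hfg by auto. auto.
Qed.

(** * A primitive recursive evaluation machine *)

(* A machine state is [cpair K S] with a control stack [K] of frames and a
   value stack [S], both coded lists; [K = 0] means halted. *)
Definition frame_eval (e v : nat) : nat := cpair 0 (cpair e v).
Definition frame_args (hs v : nat) : nat := cpair 1 (cpair hs v).
Definition frame_cons : nat := cpair 2 0.
Definition frame_apply (g : nat) : nat := cpair 3 g.
Definition frame_rec (g w m n : nat) : nat := cpair 4 (cpair g (cpair w (cpair m n))).

Definition exec_eval (dat K S0 : nat) : nat :=
  let e := cfst dat in let v := csnd dat in
  let t := cfst (Nat.pred e) in let x := csnd (Nat.pred e) in
  cond e
    (cond (chi_eq t 0) (cpair K (ncons (S (nhd v)) S0))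
    (cond (chi_eq t 1) (cpair K (ncons (nnth x v) S0))
    (cond (chi_eq t 2)
       (cpair (ncons (frame_args (csnd x) v) (ncons (frame_apply (cfst x)) K)) S0)
       (cpair (ncons (frame_eval (cfst x) (ntl v))
                 (ncons (frame_rec (csnd x) (ntl v) 0 (nhd v)) K)) S0))))
    (cpair K (ncons 0 S0)).

Definition exec_args (dat K S0 : nat) : nat :=
  let hs := cfst dat in let v := csnd dat in
  cond hs
    (cpair (ncons (frame_eval (nhd hs) v)
              (ncons (frame_args (ntl hs) v) (ncons frame_cons K))) S0)
    (cpair K (ncons 0 S0)).

Definition exec_cons (K S0 : nat) : nat :=
  cpair K (ncons (ncons (nhd (ntl S0)) (nhd S0)) (ntl (ntl S0))).

Definition exec_apply (g K S0 : nat) : nat :=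
  cpair (ncons (frame_eval g (nhd S0)) K) (ntl S0).

Definition exec_rec (dat K S0 : nat) : nat :=
  let g := cfst dat in let w := cfst (csnd dat) in
  let m := cfst (csnd (csnd dat)) in let n := csnd (csnd (csnd dat)) in
  cond (chi_eq m n) (cpair K S0)
    (cpair (ncons (frame_eval g (ncons m (ncons (nhd S0) w)))
              (ncons (frame_rec g w (S m) n) K)) (ntl S0)).

Definition step (st : nat) : nat :=
  let K := cfst st in let S0 := csnd st in
  let tag := cfst (nhd K) in let dat := csnd (nhd K) in let K' := ntl K in
  cond K
    (cond (chi_eq tag 0) (exec_eval dat K' S0)
    (cond (chi_eq tag 1) (exec_args dat K' S0)
    (cond (chi_eq tag 2) (exec_cons K' S0)
    (cond (chi_eq tag 3) (exec_apply dat K' S0)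
      (exec_rec dat K' S0)))))
    st.

Definition run (t st : nat) : nat := Nat.iter t step st.

Lemma run_add a b st : run (a + b) st = run a (run b st).
Proof. apply Nat.iter_add. Qed.

Ltac unfold_frames := unfold frame_eval, frame_args, frame_cons, frame_apply, frame_rec.

Lemma prim_rec_exec_eval : prim_rec3 exec_eval.
Proof. unfold exec_eval; unfold_frames; solve_prim_rec. Qed.
Lemma prim_rec_exec_args : prim_rec3 exec_args.
Proof. unfold exec_args; unfold_frames; solve_prim_rec. Qed.
Lemma prim_rec_exec_cons : prim_rec2 exec_cons.
Proof. unfold exec_cons; solve_prim_rec. Qed.
Lemma prim_rec_exec_apply : prim_rec3 exec_apply.
Proof. unfold exec_apply; unfold_frames; solve_prim_rec. Qed.
Lemma prim_rec_exec_rec : prim_rec3 exec_rec.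
Proof. unfold exec_rec; unfold_frames; solve_prim_rec. Qed.
#[export] Hint Resolve prim_rec_exec_eval prim_rec_exec_args prim_rec_exec_cons
  prim_rec_exec_apply prim_rec_exec_rec : primrec.

Lemma prim_rec_step : prim_rec1 step. Proof. unfold step; solve_prim_rec. Qed.
#[export] Hint Resolve prim_rec_step : primrec.

Lemma prim_rec_run : prim_rec2 run.
Proof.
  apply prim_rec2_by_recursion with (a := fun st => st) (G := fun _ r _ => step r);
    try solve [solve_prim_rec]; reflexivity.
Qed.
#[export] Hint Resolve prim_rec_run : primrec.

Lemma cond_ncons a l x y : cond (ncons a l) x y = x.
Proof. apply cond_S. Qed.

Ltac compute_step :=
  unfold step, exec_eval, exec_args, exec_cons, exec_apply, exec_rec;
  unfold_frames; cbv zeta;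
  repeat first
    [ rewrite cfst_cpair | rewrite csnd_cpair | rewrite nhd_ncons
    | rewrite ntl_ncons | rewrite cond_ncons | progress simpl Nat.pred
    | rewrite chi_eq_1 by lia | rewrite chi_eq_0 by lia
    | rewrite cond_S | rewrite cond_0 ];
  try reflexivity.

Lemma step_halted S0 : step (cpair 0 S0) = cpair 0 S0.
Proof. compute_step. Qed.

Lemma step_eval_zero v K S0 :
  step (cpair (ncons (frame_eval 0 v) K) S0) = cpair K (ncons 0 S0).
Proof. compute_step. Qed.

Lemma step_eval_succ x v K S0 :
  step (cpair (ncons (frame_eval (S (cpair 0 x)) v) K) S0)
  = cpair K (ncons (S (nhd v)) S0).
Proof. compute_step. Qed.

Lemma step_eval_proj i v K S0 :
  step (cpair (ncons (frame_eval (S (cpair 1 i)) v) K) S0)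
  = cpair K (ncons (nnth i v) S0).
Proof. compute_step. Qed.

Lemma step_eval_comp x v K S0 :
  step (cpair (ncons (frame_eval (S (cpair 2 x)) v) K) S0)
  = cpair (ncons (frame_args (csnd x) v) (ncons (frame_apply (cfst x)) K)) S0.
Proof. compute_step. Qed.

Lemma step_eval_rec t x v K S0 : 3 <= t ->
  step (cpair (ncons (frame_eval (S (cpair t x)) v) K) S0)
  = cpair (ncons (frame_eval (cfst x) (ntl v))
             (ncons (frame_rec (csnd x) (ntl v) 0 (nhd v)) K)) S0.
Proof. intros. compute_step. Qed.

Lemma step_args_nil v K S0 :
  step (cpair (ncons (frame_args 0 v) K) S0) = cpair K (ncons 0 S0).
Proof. compute_step. Qed.

Lemma step_args_cons hs v K S0 :
  step (cpair (ncons (frame_args (S hs) v) K) S0)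
  = cpair (ncons (frame_eval (cfst hs) v)
             (ncons (frame_args (csnd hs) v) (ncons frame_cons K))) S0.
Proof. compute_step. Qed.

Lemma step_cons r l K S0 :
  step (cpair (ncons frame_cons K) (ncons l (ncons r S0)))
  = cpair K (ncons (ncons r l) S0).
Proof. compute_step. Qed.

Lemma step_apply g l K S0 :
  step (cpair (ncons (frame_apply g) K) (ncons l S0))
  = cpair (ncons (frame_eval g l) K) S0.
Proof. compute_step. Qed.

Lemma step_rec_done g w n r K S0 :
  step (cpair (ncons (frame_rec g w n n) K) (ncons r S0)) = cpair K (ncons r S0).
Proof. compute_step. Qed.

Lemma step_rec_next g w m n r K S0 : m <> n ->
  step (cpair (ncons (frame_rec g w m n) K) (ncons r S0))
  = cpair (ncons (frame_eval g (ncons m (ncons r w)))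
             (ncons (frame_rec g w (S m) n) K)) S0.
Proof. intros. compute_step. Qed.

Definition reaches (a b : nat) : Prop := exists t, run t a = b.

Lemma reaches_trans a b c : reaches a b -> reaches b c -> reaches a c.
Proof.
  intros [n Hn] [m Hm]. exists (m + n). rewrite run_add, Hn. auto.
Qed.

Lemma reaches_step a b : step a = b -> reaches a b.
Proof. exists 1. auto. Qed.

Lemma run_simulates_Eval :
  (forall e v r, Eval e v r -> forall K S0,
     reaches (cpair (ncons (frame_eval e (code_list v)) K) S0) (cpair K (ncons r S0))) /\
  (forall hs v rs, EvalList hs v rs -> forall K S0,
     reaches (cpair (ncons (frame_args hs (code_list v)) K) S0)
             (cpair K (ncons (code_list rs) S0))) /\
  (forall f g w n r, EvalRec f g w n r -> forall N K S0, n <= N ->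
     reaches (cpair (ncons (frame_eval f (code_list w))
                       (ncons (frame_rec g (code_list w) 0 N) K)) S0)
             (cpair (ncons (frame_rec g (code_list w) n N) K) (ncons r S0))).
Proof.
  apply Eval_mutind; intros.
  - apply reaches_step, step_eval_zero.
  - apply reaches_step. rewrite step_eval_succ, nhd_code_list. reflexivity.
  - apply reaches_step. rewrite step_eval_proj, nnth_code_list. reflexivity.
  - eapply reaches_trans; [apply reaches_step, step_eval_comp|].
    eapply reaches_trans; [apply H|].
    eapply reaches_trans; [apply reaches_step, step_apply|].
    apply H0.
  - eapply reaches_trans; [apply reaches_step, step_eval_rec; auto|].
    rewrite ntl_code_list, nhd_code_list.
    eapply reaches_trans; [apply H; lia|].
    apply reaches_step, step_rec_done.
  - apply reaches_step, step_args_nil.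
  - eapply reaches_trans; [apply reaches_step, step_args_cons|].
    eapply reaches_trans; [apply H|].
    eapply reaches_trans; [apply H0|].
    apply reaches_step, step_cons.
  - apply H.
  - eapply reaches_trans; [apply H; lia|].
    eapply reaches_trans; [apply reaches_step, step_rec_next; lia|].
    apply H0.
Qed.

Definition init (e p : nat) : nat := cpair (ncons (frame_eval e (ncons p 0)) 0) 0.
Definition halted_by (e p t : nat) : nat := 1 - cfst (run t (init e p)).
Definition output (e p t : nat) : nat := nhd (csnd (run t (init e p))).
Definition halts_at (e p t : nat) : nat := halted_by e p t * (1 - halted_by e p (Nat.pred t)).

Lemma prim_rec_halted_by : prim_rec3 halted_by.
Proof. unfold halted_by, init; unfold_frames; solve_prim_rec. Qed.
Lemma prim_rec_output : prim_rec3 output.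
Proof. unfold output, init; unfold_frames; solve_prim_rec. Qed.
#[export] Hint Resolve prim_rec_halted_by prim_rec_output : primrec.
Lemma prim_rec_halts_at : prim_rec3 halts_at.
Proof. unfold halts_at; solve_prim_rec. Qed.
#[export] Hint Resolve prim_rec_halts_at : primrec.

Lemma run_halted t S0 : run t (cpair 0 S0) = cpair 0 S0.
Proof.
  induction t as [|t IH]; [reflexivity|].
  change (step (run t (cpair 0 S0)) = cpair 0 S0). rewrite IH. apply step_halted.
Qed.

Lemma reaches_init_halted e p r : Eval e [p] r -> reaches (init e p) (cpair 0 (ncons r 0)).
Proof. intros H. apply (proj1 run_simulates_Eval _ _ _ H 0 0). Qed.

Lemma halted_by_01 e p t : halted_by e p t = 0 \/ halted_by e p t = 1.
Proof. unfold halted_by. lia. Qed.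

Lemma halted_by_0 e p : halted_by e p 0 = 0.
Proof. unfold halted_by, init, ncons. simpl. rewrite cfst_cpair. lia. Qed.

Lemma halted_by_run e p t :
  halted_by e p t = 1 -> run t (init e p) = cpair 0 (csnd (run t (init e p))).
Proof.
  unfold halted_by. intros H. rewrite <- (cpair_cfst_csnd (run t (init e p))) at 1.
  f_equal. lia.
Qed.

Lemma halted_by_mono e p t d : halted_by e p t = 1 -> halted_by e p (d + t) = 1.
Proof.
  intros H. unfold halted_by.
  rewrite run_add, halted_by_run, run_halted, cfst_cpair by auto. lia.
Qed.

Lemma halted_by_eventually e p : exists t, halted_by e p t = 1.
Proof.
  destruct (Eval_total e [p]) as [r Hr].
  destruct (reaches_init_halted _ _ _ Hr) as [t Ht].
  exists t. unfold halted_by. rewrite Ht, cfst_cpair. lia.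
Qed.

Lemma output_halted e p r t : Eval e [p] r -> halted_by e p t = 1 -> output e p t = r.
Proof.
  intros Hr Ht. destruct (reaches_init_halted _ _ _ Hr) as [n Hn].
  assert (Hrun : run t (init e p) = cpair 0 (ncons r 0)).
  { destruct (le_lt_dec n t).
    - replace t with ((t - n) + n) by lia. rewrite run_add, Hn. apply run_halted.
    - pose proof (halted_by_run _ _ _ Ht) as Hh.
      replace n with ((n - t) + t) in Hn by lia.
      rewrite run_add, Hh, run_halted in Hn. rewrite Hh. auto. }
  unfold output. rewrite Hrun, csnd_cpair. apply nhd_ncons.
Qed.

Lemma halts_at_iff e p t :
  halts_at e p t = 1 <-> halted_by e p t = 1 /\ halted_by e p (Nat.pred t) = 0.
Proof.
  unfold halts_at.
  destruct (halted_by_01 e p t) as [-> | ->];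
    destruct (halted_by_01 e p (Nat.pred t)) as [-> | ->]; lia.
Qed.

Lemma halts_at_01 e p t : halts_at e p t = 0 \/ halts_at e p t = 1.
Proof.
  unfold halts_at.
  destruct (halted_by_01 e p t) as [-> | ->];
    destruct (halted_by_01 e p (Nat.pred t)) as [-> | ->]; lia.
Qed.

Lemma halts_at_exists e p : exists t, halts_at e p t = 1.
Proof.
  destruct (halted_by_eventually e p) as [t Ht].
  induction t as [|t IH]; [rewrite halted_by_0 in Ht; discriminate|].
  destruct (halted_by_01 e p t) as [H|H]; auto.
  exists (S t). apply halts_at_iff. auto.
Qed.

Lemma halts_at_unique e p t1 t2 : halts_at e p t1 = 1 -> halts_at e p t2 = 1 -> t1 = t2.
Proof.
  rewrite !halts_at_iff. intros [A1 B1] [A2 B2].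
  destruct (lt_eq_lt_dec t1 t2) as [[H|]|H]; auto.
  - pose proof (halted_by_mono e p t1 (Nat.pred t2 - t1) A1).
    replace (Nat.pred t2 - t1 + t1) with (Nat.pred t2) in * by lia. lia.
  - pose proof (halted_by_mono e p t2 (Nat.pred t1 - t2) A2).
    replace (Nat.pred t1 - t2 + t2) with (Nat.pred t1) in * by lia. lia.
Qed.

Definition halting_time (e p : nat) : nat :=
  proj1_sig (constructive_indefinite_ground_description_nat (fun t => halts_at e p t = 1)
    (fun t => Nat.eq_dec (halts_at e p t) 1) (halts_at_exists e p)).

Lemma halts_at_halting_time e p : halts_at e p (halting_time e p) = 1.
Proof. unfold halting_time. destruct constructive_indefinite_ground_description_nat; auto. Qed.

Lemma halts_at_other e p t : t <> halting_time e p -> halts_at e p t = 0.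
Proof.
  intros H. destruct (halts_at_01 e p t) as [|H1]; auto.
  exfalso. apply H, (halts_at_unique e p); auto using halts_at_halting_time.
Qed.

Lemma output_halting_time e p r : Eval e [p] r -> output e p (halting_time e p) = r.
Proof.
  intros Hr. apply output_halted; auto.
  apply (halts_at_iff e p _), halts_at_halting_time.
Qed.

(** * The diagonal signed digit sequence *)

(* Block [j] occupies positions [block_start j + k] for [k <= H + 2], where
   [H] is the running time of program [j] on input [block_start j]; its
   digits are [+1], [H] zeros, the flip digit at [k = H + 1], and a zero.
   Digits are encoded as [0, 1, 2] for [-1, 0, 1]. *)
Fixpoint block_start (j : nat) : nat :=
  match j with
  | 0 => 1
  | S j' => block_start j' + halting_time j' (block_start j') + 3
  end.

Definition next_block_state (i st : nat) : nat :=
  cond (chi_le (csnd st + 2) i * halts_at (cfst st) (csnd st) (i - csnd st - 2))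
    (cpair (S (cfst st)) (S i)) st.

(* [block_state i = cpair j (block_start j)] for the block [j] containing [i]. *)
Fixpoint block_state (i : nat) : nat :=
  match i with 0 => cpair 0 1 | S i' => next_block_state i' (block_state i') end.

Definition digit_in_block (i st : nat) : nat :=
  let j := cfst st in let s := csnd st in
  cond (chi_eq i s) 2
    (cond (chi_le (S s) i * halts_at j s (i - s - 1))
       (cond (chi_eq (output j s (i - s - 1)) 1) 0 2) 1).

Definition diag_digit (i : nat) : nat := digit_in_block i (block_state i).

Lemma prim_rec_block_state : prim_rec1 block_state.
Proof.
  apply prim_rec1_by_recursion with (c := cpair 0 1) (G := next_block_state);
    try reflexivity. unfold next_block_state. solve_prim_rec.
Qed.
#[export] Hint Resolve prim_rec_block_state : primrec.

Lemma prim_rec_diag_digit : prim_rec1 diag_digit.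
Proof. unfold diag_digit, digit_in_block. solve_prim_rec. Qed.

Lemma diag_digit_le i : diag_digit i <= 2.
Proof. unfold diag_digit, digit_in_block. repeat apply cond_le; lia. Qed.

Lemma block_start_pos j : 1 <= block_start j.
Proof. induction j; simpl; lia. Qed.

Lemma block_start_lt_mono j j' : j < j' -> block_start (S j) <= block_start j'.
Proof. induction 1; simpl in *; lia. Qed.

Lemma block_state_spec i : exists j, block_state i = cpair j (block_start j) /\
  i < block_start (S j) /\ (i < block_start j -> j = 0).
Proof.
  induction i as [|i IH]; [exists 0; simpl; split; [reflexivity | lia]|].
  destruct IH as [j [Hst [Hi Hj]]].
  simpl. rewrite Hst. unfold next_block_state. rewrite cfst_cpair, csnd_cpair.
  simpl block_start in Hi.
  destruct (Nat.eq_dec i (block_start j + halting_time j (block_start j) + 2)) as [E|E].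
  - rewrite chi_le_1 by lia.
    replace (i - block_start j - 2) with (halting_time j (block_start j)) by lia.
    rewrite halts_at_halting_time, Nat.mul_1_l, cond_S. exists (S j).
    split; [f_equal; simpl; lia|]. simpl. lia.
  - replace (chi_le (block_start j + 2) i * halts_at j (block_start j) (i - block_start j - 2))
      with 0.
    + rewrite cond_0. exists j. simpl. split; [auto|]. split; [lia|]. intros; apply Hj; lia.
    + destruct (le_lt_dec (block_start j + 2) i).
      * rewrite halts_at_other by lia. lia.
      * rewrite chi_le_0 by lia. lia.
Qed.

Lemma block_state_in_block j i : block_start j <= i < block_start (S j) ->
  block_state i = cpair j (block_start j).
Proof.
  intros Hi. destruct (block_state_spec i) as [j' [Hst [Hi' Hj']]].
  replace j with j'; auto.
  destruct (le_lt_dec (block_start j') i).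
  - destruct (lt_eq_lt_dec j j') as [[H|H]|H]; auto;
      pose proof (block_start_lt_mono _ _ H); lia.
  - specialize (Hj' l). subst. pose proof (block_start_pos j). simpl in *. lia.
Qed.

Section Block.
Variable j : nat.
Let p := block_start j.
Let H := halting_time j p.

Lemma block_state_at k : k <= S (S H) -> block_state (p + k) = cpair j p.
Proof. intros Hk. apply block_state_in_block. unfold H, p in *. simpl. lia. Qed.

Lemma diag_digit_block_start : diag_digit p = 2.
Proof.
  pose proof (block_state_at 0 ltac:(lia)) as Hst. rewrite Nat.add_0_r in Hst.
  unfold diag_digit. rewrite Hst. unfold digit_in_block.
  rewrite cfst_cpair, csnd_cpair, chi_eq_1 by lia. apply cond_S.
Qed.

Lemma diag_digit_flip :
  diag_digit (p + S H) = cond (chi_eq (output j p H) 1) 0 2.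
Proof.
  unfold diag_digit. rewrite block_state_at by lia. unfold digit_in_block.
  rewrite cfst_cpair, csnd_cpair, chi_eq_0, cond_0, chi_le_1 by lia.
  replace (p + S H - p - 1) with H by lia.
  unfold H. rewrite halts_at_halting_time. apply cond_S.
Qed.

Lemma diag_digit_zero k : 1 <= k <= S (S H) -> k <> S H -> diag_digit (p + k) = 1.
Proof.
  intros Hk Hflip. unfold diag_digit. rewrite block_state_at by lia. unfold digit_in_block.
  rewrite cfst_cpair, csnd_cpair, chi_eq_0, cond_0, chi_le_1 by lia.
  rewrite halts_at_other by (unfold H in *; lia). apply cond_0.
Qed.

End Block.

(** * Binary series *)

(* [digits_num d n = sum_{i=1}^n d i * 2^(n-i)], the numerator of the
   [n]-th partial sum over [2^n]. *)
Fixpoint digits_num (d : nat -> Z) (n : nat) : Z :=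
  match n with 0 => 0%Z | S m => (2 * digits_num d m + d (S m))%Z end.

Lemma digits_num_S d n : digits_num d (S n) = (2 * digits_num d n + d (S n))%Z.
Proof. reflexivity. Qed.

Lemma digits_num_add d m k :
  digits_num d (m + k) = (2 ^ Z.of_nat k * digits_num d m + digits_num (fun i => d (m + i)%nat) k)%Z.
Proof.
  induction k as [|k IH].
  - rewrite Nat.add_0_r. change (digits_num d m = 1 * digits_num d m + 0)%Z. ring.
  - rewrite Nat.add_succ_r, !digits_num_S, IH, Nat2Z.inj_succ, Z.pow_succ_r,
      Nat.add_succ_r by lia.
    ring.
Qed.

Lemma digits_num_bounds (a b : Z) d k : (forall i, 1 <= i -> (a <= d i <= b)%Z) ->
  (a * (2 ^ Z.of_nat k - 1) <= digits_num d k <= b * (2 ^ Z.of_nat k - 1))%Z.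
Proof.
  intros Hd. induction k as [|k IH]; [simpl; lia|].
  rewrite digits_num_S, Nat2Z.inj_succ, Z.pow_succ_r by lia.
  specialize (Hd (S k) ltac:(lia)). lia.
Qed.

Lemma digits_num_zeros d k : (forall i, 1 <= i <= k -> d i = 0%Z) -> digits_num d k = 0%Z.
Proof.
  induction k as [|k IH]; intros H; [reflexivity|].
  rewrite digits_num_S, IH, H by first [lia | intros; apply H; lia]. reflexivity.
Qed.

Local Open Scope R_scope.

Lemma IZR_pow2 n : IZR (2 ^ Z.of_nat n) = 2 ^ n.
Proof. rewrite <- pow_IZR. reflexivity. Qed.

Lemma pow2_pos n : 0 < 2 ^ n.
Proof. apply pow_lt; lra. Qed.

Lemma sum_digits_num d n :
  sum_f_R0 (fun k => IZR (d (S k)) / 2 ^ S k) n = IZR (digits_num d (S n)) / 2 ^ S n.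
Proof.
 induction n as [|n IH].
  - simpl. field.
  - rewrite tech5, IH, (digits_num_S d (S n)), plus_IZR, mult_IZR. pose proof (pow2_pos n). simpl. field. lra.
Qed.

Lemma Un_cv_eventually_bounded u L lo hi N :
  Un_cv u L -> (forall n, (n >= N)%nat -> lo <= u n <= hi) -> lo <= L <= hi.
Proof.
  intros Hc Hb. split; apply Rnot_lt_le; intros Hlt.
  - destruct (Hc (lo - L)) as [M HM]; [lra|].
    specialize (HM (max N M) ltac:(lia)). specialize (Hb (max N M) ltac:(lia)).
    unfold Rdist in HM. apply Rabs_def2 in HM. lra.
  - destruct (Hc (L - hi)) as [M HM]; [lra|].
    specialize (HM (max N M) ltac:(lia)). specialize (Hb (max N M) ltac:(lia)).
    unfold Rdist in HM. apply Rabs_def2 in HM. lra.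
Qed.

Lemma digits_num_scaled d m k :
  IZR (digits_num d (m + k)) / 2 ^ (m + k)
  = (IZR (digits_num d m) + IZR (digits_num (fun i => d (m + i)%nat) k) / 2 ^ k) / 2 ^ m.
Proof.
  rewrite digits_num_add, plus_IZR, mult_IZR, IZR_pow2, pow_add.
  pose proof (pow2_pos m). pose proof (pow2_pos k). field. lra.
Qed.

Lemma digit_series_bracket (a b : Z) d L m :
  (a <= 0 <= b)%Z -> (forall i, (1 <= i)%nat -> (a <= d i <= b)%Z) ->
  infinite_sum (fun n => IZR (d (S n)) / 2 ^ S n) L ->
  IZR (digits_num d m) + IZR a <= 2 ^ m * L <= IZR (digits_num d m) + IZR b.
Proof.
  intros [Ha Hb] Hd Hs. pose proof (pow2_pos m) as Hm.
  assert (Htail : forall k,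
    IZR a <= IZR (digits_num (fun i => d (m + i)%nat) k) / 2 ^ k <= IZR b).
  { intros k. pose proof (pow2_pos k).
    destruct (digits_num_bounds a b (fun i => d (m + i)%nat) k) as [A B];
      [intros; apply Hd; lia|].
    apply IZR_le in A, B, Ha, Hb. rewrite mult_IZR, minus_IZR, IZR_pow2 in A, B.
    split; [apply Rmult_le_reg_r with (2 ^ k) | apply Rmult_le_reg_r with (2 ^ k)];
      try lra; field_simplify; nra. }
  assert (HL : (IZR (digits_num d m) + IZR a) / 2 ^ m <= L
               <= (IZR (digits_num d m) + IZR b) / 2 ^ m).
  { apply (Un_cv_eventually_bounded _ L _ _ m Hs). intros n Hn.
    rewrite sum_digits_num. replace (S n) with (m + (S n - m))%nat by lia.
    rewrite digits_num_scaled. specialize (Htail (S n - m)%nat).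
    unfold Rdiv at 1 3 5. pose proof (Rinv_0_lt_compat _ Hm).
    split; apply Rmult_le_compat_r; lra. }
  destruct HL as [HL1 HL2].
  apply (Rmult_le_compat_l (2 ^ m)) in HL1, HL2; try lra.
  field_simplify in HL1; field_simplify in HL2; lra.
Qed.

Lemma signed_digit_series_converges d :
  (forall i, (1 <= i)%nat -> (-1 <= d i <= 1)%Z) ->
  exists L, infinite_sum (fun n => IZR (d (S n)) / 2 ^ S n) L.
Proof.
  intros Hd.
  assert (Hmaj : forall n, 0 <= Rabs (IZR (d (S n)) / 2 ^ S n) <= 1 * (/ 2) ^ n).
  { intros n. split; [apply Rabs_pos|].
    specialize (Hd (S n) ltac:(lia)). pose proof (pow2_pos n).
    assert (Rabs (IZR (d (S n))) <= 1) by (rewrite <- abs_IZR; apply IZR_le; lia).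
    unfold Rdiv. rewrite Rabs_mult, Rabs_inv, (Rabs_right (2 ^ S n)), <- pow_inv
      by (simpl; lra).
    pose proof (pow_lt (/ 2) n ltac:(lra)). pose proof (Rabs_pos (IZR (d (S n)))).
    simpl. nra. }
  assert (Hgeom := GP_infinite (/ 2) ltac:(rewrite Rabs_right; lra)).
  destruct (cv_cauchy_2 _ (cauchy_abs _ (cv_cauchy_1 _
    (Rseries_CV_comp _ _ Hmaj (exist _ _ Hgeom))))) as [L HL].
  exists L. exact HL.
Qed.

Lemma IZR_floor_unique (n m : Z) y :
  IZR n <= y <= IZR n + 1 -> IZR m < y < IZR m + 1 -> n = m.
Proof.
  intros Hn Hm.
  assert (n < m + 1)%Z by (apply lt_IZR; rewrite plus_IZR; lra).
  assert (m < n + 1)%Z by (apply lt_IZR; rewrite plus_IZR; lra).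
  lia.
Qed.

(* The trailing zero halves the error of the bracket at [p + H + 2], which
   keeps [2^p x] strictly between two integers. *)
Lemma signed_window_floor s x p H (sigma : Z) :
  (forall i, (1 <= i)%nat -> (-1 <= s i <= 1)%Z) ->
  infinite_sum (fun n => IZR (s (S n)) / 2 ^ S n) x ->
  (forall k, (1 <= k <= H)%nat -> s (p + k)%nat = 0%Z) ->
  s (p + S H)%nat = sigma -> s (p + S (S H))%nat = 0%Z ->
  (sigma = 1 \/ sigma = -1)%Z ->
  exists n, IZR n < 2 ^ p * x < IZR n + 1 /\ (2 * n = 2 * digits_num s p + sigma - 1)%Z.
Proof.
  intros Hs Hx Hzero Hsigma Hnext Hpm.
  assert (Hwin : digits_num (fun i => s (p + i)%nat) (S (S H)) = (2 * sigma)%Z).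
  { rewrite !digits_num_S, digits_num_zeros, Hsigma, Hnext by (intros; apply Hzero; lia).
    ring. }
  destruct (digit_series_bracket (-1) 1 s x (p + S (S H)) ltac:(lia) Hs Hx) as [A B].
  rewrite digits_num_add, Hwin, plus_IZR, mult_IZR, mult_IZR, IZR_pow2, pow_add in A, B.
  set (W := 2 ^ S (S H)) in A, B. set (X := 2 ^ p * x).
  assert (HW : 4 <= W).
  { unfold W. simpl. pose proof (pow_R1_Rle 2 H ltac:(lra)). lra. }
  assert (HWX : 2 ^ p * W * x = W * X) by (unfold X; ring).
  rewrite HWX in A, B. set (D := digits_num s p) in *.
  destruct Hpm as [-> | ->].
  - exists D. split; [|ring]. simpl in A, B. split; nra.
  - exists (D - 1)%Z. split; [|ring]. rewrite minus_IZR. simpl in A, B. split; nra.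
Qed.

(* As [s p = 1], [digits_num s p] is odd, so [sigma] fixes the parity of the
   integer part of [2^p x], which is the binary digit at [p]. *)
Lemma binary_digit_forced_by_window s b x (I : Z) p H (sigma : Z) :
  (1 <= p)%nat ->
  (forall i, (1 <= i)%nat -> (-1 <= s i <= 1)%Z) ->
  infinite_sum (fun n => IZR (s (S n)) / 2 ^ S n) x ->
  s p = 1%Z ->
  (forall k, (1 <= k <= H)%nat -> s (p + k)%nat = 0%Z) ->
  s (p + S H)%nat = sigma -> s (p + S (S H))%nat = 0%Z ->
  (sigma = 1 \/ sigma = -1)%Z ->
  (forall i, (1 <= i)%nat -> (0 <= b i <= 1)%Z) ->
  infinite_sum (fun n => IZR (b (S n)) / 2 ^ S n) (x - IZR I) ->
  (2 * b p = sigma + 1)%Z.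
Proof.
  intros Hp Hs Hx Hsp Hzero Hsigma Hnext Hpm Hb Hxb.
  destruct (signed_window_floor s x p H sigma Hs Hx Hzero Hsigma Hnext Hpm)
    as [n [Hn Hnum]].
  destruct (digit_series_bracket 0 1 b (x - IZR I) p ltac:(lia) Hb Hxb) as [A B].
  assert (Hfloor : (digits_num b p + 2 ^ Z.of_nat p * I)%Z = n).
  { apply (IZR_floor_unique _ _ (2 ^ p * x)); [|exact Hn].
    rewrite plus_IZR, mult_IZR, IZR_pow2. split; nra. }
  destruct p as [|p]; [lia|].
  rewrite !digits_num_S, Hsp, Nat2Z.inj_succ, Z.pow_succ_r in * by lia.
  specialize (Hb (S p) ltac:(lia)).
  destruct Hpm as [-> | ->]; lia.
Qed.

Local Open Scope R_scope.

Lemma PRCN_SPRCN x : PRCN x -> SPRCN x.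
Proof.
  intros [I [P [[P' [HP' Hbits]] Hx]]].
  exists I, P. split; auto.
  exists (fun i => S (P' i)). split.
  - exact (prim_rec_comp1 1 S _ prim_rec_succ HP').
  - intros i Hi. destruct (Hbits i Hi) as [Hle ->]. split; lia.
Qed.

Definition diag_signed (i : nat) : Z := (Z.of_nat (diag_digit i) - 1)%Z.

Lemma diag_signed_bounds i : (1 <= i)%nat -> (-1 <= diag_signed i <= 1)%Z.
Proof. intros _. unfold diag_signed. pose proof (diag_digit_le i). lia. Qed.

Lemma pr_signed_digits_diag : pr_signed_digits diag_signed.
Proof.
  exists diag_digit. split; [exact prim_rec_diag_digit|].
  intros i _. split; [apply diag_digit_le | reflexivity].
Qed.

Lemma diag_not_PRCN x :
  infinite_sum (fun n => IZR (diag_signed (S n)) / 2 ^ S n) x -> ~ PRCN x.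
Proof.
  intros Hx [I [P [[P' [HP' Hbits]] HxP]]].
  destruct (prim_rec_has_code 1 _ HP') as [e He].
  pose proof (diag_digit_block_start e) as Hstart.
  pose proof (diag_digit_flip e) as Hflip.
  pose proof (diag_digit_zero e) as Hzero.
  set (p := block_start e) in *. set (H := halting_time e p) in *.
  assert (Hout : output e p H = P' p) by (apply output_halting_time, (He [p]); reflexivity).
  pose proof (block_start_pos e) as Hp.
  assert (Hforced : (2 * P p = diag_signed (p + S H) + 1)%Z).
  { apply (binary_digit_forced_by_window diag_signed P x I p H); auto.
    - exact diag_signed_bounds.
    - unfold diag_signed. rewrite Hstart. reflexivity.
    - intros k Hk. unfold diag_signed. rewrite Hzero by lia. reflexivity.
    - unfold diag_signed. rewrite Hzero by lia. reflexivity.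
    - unfold diag_signed. rewrite Hflip.
      destruct (Nat.eq_dec (output e p H) 1) as [E|E];
        [rewrite chi_eq_1, cond_S | rewrite chi_eq_0, cond_0]; auto.
    - intros i Hi. destruct (Hbits i Hi) as [Hle ->]. lia. }
  unfold diag_signed in Hforced. rewrite Hflip, Hout in Hforced.
  destruct (Hbits p Hp) as [Hle HPp]. rewrite HPp in Hforced.
  destruct (P' p) as [|[|]]; [rewrite chi_eq_0, cond_0 in Hforced
                             | rewrite chi_eq_1, cond_S in Hforced | ]; simpl in *; lia.
Qed.

Theorem theorem3 :
  (forall x : R, PRCN x -> SPRCN x) /\ (exists x : R, SPRCN x /\ ~ PRCN x).
Proof.
  split; [exact PRCN_SPRCN|].
  destruct (signed_digit_series_converges diag_signed diag_signed_bounds) as [x Hx].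
  exists x. split; [|exact (diag_not_PRCN x Hx)].
  exists 0%Z, diag_signed. split; [exact pr_signed_digits_diag|].
  unfold binary_series_value. rewrite Rminus_0_r. exact Hx.
Qed.
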